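(* Let $K=(C,\langle Q_i,1\le i\le k\rangle)$ and $K'=(C',\langle Q'_j,1\le j\le l\rangle)$ be two non-degenerate CMIs in pure form, with $\mathrm{can}(K)=(C,\langle\mathbb I_K,\mathbb I_K,P_i,1\le i\le t\rangle)$ and $\mathrm{can}(K')=(C',\langle\mathbb I_{K'},\mathbb I_{K'},P'_j,1\le j\le s\rangle)$. If $K\sim K'$, then $\langle P_i,1\le i\le t\rangle=\langle P'_j,1\le j\le s\rangle$.
   Context: Setting: $X_1,\dots,X_n$ jointly distributed discrete random variables with $H(X_i)<\infty$; distribution unspecified. $X_\alpha=(X_i,i\in\alpha)$, $X_\emptyset$ constant. A CMI is $K=(C,\langle Q_1,\dots,Q_k\rangle)$, $k\ge0$, $C\subseteq\{1,\dots,n\}$, $\langle\cdot\rangle$ an unordered multiset of subsets; valid (for a given distribution) if $\sum_iH(X_{Q_i}|X_C)-H(X_{Q_1},\dots,X_{Q_k}|X_C)=0$. Empty members may be deleted; equality of collections is multiset equality. $K\sim K'$: for every joint distribution both valid or both invalid. Degenerate = valid for every distribution, written $(\cdot,\langle\ \rangle)$. Pure form: all $Q_i\ne\emptyset$, $Q_i\cap C=\emptyset$. For pure $K$: $\mathbb I_K$ = set of indices lying in at least two members of the collection if $k\ge2$, else $\emptyset$; $P_1,\dots,P_t$ the nonempty sets among $Q_i\setminus\mathbb I_K$; $\mathrm{can}(K)=(\cdot,\langle\ \rangle)$ if $k\le1$, $(C,\langle\mathbb I_K,\mathbb I_K\rangle)$ if $k\ge2,\mathbb I_K\ne\emptyset,t\le1$,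 $(C,\langle P_1..P_t\rangle)$ if $k\ge2,\mathbb I_K=\emptyset$, $(C,\langle\mathbb I_K,\mathbb I_K,P_1..P_t\rangle)$ if $k\ge2,\mathbb I_K\ne\emptyset,t\ge2$. The general-form notation $(C,\langle\mathbb I_K,\mathbb I_K,P_i,1\le i\le t\rangle)$ means: the two copies of $\mathbb I_K$ are omitted when $\mathbb I_K=\emptyset$, and in this notation $t=0$ when $\mathrm{can}(K)=(C,\langle\mathbb I_K,\mathbb I_K\rangle)$ (so $t\ne1$). *)

From HB Require Import structures.
From mathcomp Require Import all_boot all_order all_algebra.
From mathcomp Require Import all_classical all_reals.
From mathcomp Require Import ereal esum exp.
Set Implicit Arguments. Unset Strict Implicit. Unset Printing Implicit Defensive.
Import Order.TTheory GRing.Theory Num.Theory.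
Local Open Scope ring_scope.

(* Random variables X_0, ..., X_{n-1} (indices 'I_n), each taking values in a
   countable alphabet, encoded w.l.o.g. as nat.  A joint distribution is a pmf
   on outcomes  'I_n -> nat. *)
Definition outcome (n : nat) := {ffun 'I_n -> nat}.

(* realisation of X_A : coordinates outside A are forgotten (set to 0) *)
Definition proj n (A : {set 'I_n}) (x : outcome n) : outcome n :=
  [ffun i => if i \in A then x i else 0%N].

Section Entropy.
Variables (R : realType) (n : nat).
Implicit Types (p : outcome n -> R) (A C : {set 'I_n}).

Definition marg p A (y : outcome n) : \bar R :=
  \esum_(x in ([set x | proj A x = y])%classic) (p x)%:E.

(* Shannon entropy H(X_A) (natural log), possibly +oo; ln 0 = 0. *)
Definition ent p A : \bar R :=
  \esum_(y in range (proj A))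
     (- (fine (marg p A y)) * ln (fine (marg p A y)))%:E.

Definition is_dist p : Prop :=
  [/\ forall x, 0 <= p x,
      \esum_(x in (@classical_sets.setT (outcome n))) (p x)%:E = 1%E
    & forall i : 'I_n, (ent p [set i] < +oo)%E].

Definition cent p A C : \bar R := (ent p (A :|: C) - ent p C)%E.
End Entropy.

(* A CMI (C, <Q_1,...,Q_k>): the multiset is a seq, compared up to perm_eq. *)
Definition CMI n := ({set 'I_n} * seq {set 'I_n})%type.

(* valid: sum_i H(X_Qi|X_C) - H(X_Q1,...,X_Qk|X_C) = 0; the joint variable
   (X_Q1,...,X_Qk) is X_{Q1 u ... u Qk}. *)
Definition valid (R : realType) n (p : outcome n -> R) (K : CMI n) : Prop :=
  ((\sum_(Q <- K.2) cent p Q K.1) - cent p (\bigcup_(Q <- K.2) Q) K.1 = 0)%E.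

Definition cmi_equiv (R : realType) n (K K' : CMI n) : Prop :=
  forall p : outcome n -> R, is_dist p -> (valid p K <-> valid p K').

Definition degenerate (R : realType) n (K : CMI n) : Prop :=
  forall p : outcome n -> R, is_dist p -> valid p K.

Definition pure_form n (K : CMI n) : Prop :=
  forall Q, Q \in K.2 -> Q != finset.set0 /\ Q :&: K.1 = finset.set0.

Definition IK n (K : CMI n) : {set 'I_n} :=
  if (1 < size K.2)%N then [set x : 'I_n | (1 < count (fun Q : {set 'I_n} => x \in Q) K.2)%N]
  else finset.set0.

Definition Ps n (K : CMI n) : seq {set 'I_n} :=
  [seq Q :\: IK K | Q <- K.2 & Q :\: IK K != finset.set0].

(* The P-part of can(K) in the general-form notation
   (C, <I_K, I_K, P_i, 1<=i<=t>): empty when can(K) is degenerate or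
   equals (C, <I_K, I_K>) (i.e. I_K nonempty and t <= 1). *)
Definition canP n (K : CMI n) : seq {set 'I_n} :=
  if (size K.2 <= 1)%N then [::]
  else if (IK K != finset.set0) && (size (Ps K) <= 1)%N then [::]
  else Ps K.

From Pilot Require Import Defs.
From mathcomp Require Import all_boot all_order all_algebra.
From mathcomp Require Import all_classical all_reals.
From mathcomp Require Import ereal esum exp.
From mathcomp Require Import zify.
Set Implicit Arguments. Unset Strict Implicit. Unset Printing Implicit Defensive.
Import Order.TTheory GRing.Theory Num.Theory.
Local Open Scope ring_scope.

(* Test K against the distribution in which X_x and X_y are copies of one fair bit
   and all other variables are constant.  Then H(X_A) is ln 2 or 0 according as A
   meets {x, y} or not, so K is invalid exactly when x, y lie outside C and at least
   two Q_i meet {x, y}; call this relation [linked K].  Equivalent CMIs therefore have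
   the same relation.  For pure K, [linked K x x] means x is in I_K, and two points
   outside I_K covered by the Q_i are linked iff no Q_i contains both, i.e. iff they
   lie in different P-blocks.  Hence when t >= 2 the P_i are the classes of
   "not linked" among the points that are linked to some other such point, and when
   t <= 1 there are no such points: in both cases the P-part of can(K) is determined
   by [linked K]. *)

Section TwoPointEntropy.
Variable R : realType.
Local Open Scope classical_set_scope.

Lemma half_add_half : 2^-1 + 2^-1 = 1 :> R.
Proof. by rewrite [RHS](splitr 1) mul1r. Qed.

Lemma esum_point (T : choiceType) (D : set T) (b : T) (w : R) : 0 <= w ->
  \esum_(x in D) (if x == b then w else 0)%:E = (if b \in D then w else 0)%:E.
Proof.
move=> w_ge0.
rewrite (esumID [set b]); last by move=> x _; case: ifP; rewrite lee_fin.
rewrite [X in (_ + X)%E]esum1 ?adde0; last by move=> x [_ /eqP/negbTE->].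
case: (boolP (b \in D)) => [/set_mem Db | /negP Db].
  by rewrite setIidr ?esum_set1 ?eqxx ?lee_fin // => _ ->.
rewrite (_ : _ `&` _ = set0) ?esum_set0 // -subset0 => x [Dx /= xb].
by apply/Db/mem_set; rewrite -xb.
Qed.

Definition coin (T : eqType) (a b : T) (x : T) : R :=
  (if x == a then 2^-1 else 0) + (if x == b then 2^-1 else 0).

Lemma esum_coin (T : choiceType) (a b : T) (D : set T) :
  \esum_(x in D) (coin a b x)%:E =
  ((if a \in D then 2^-1 else 0) + (if b \in D then 2^-1 else 0))%:E.
Proof.
have half_ge0 : 0 <= 2^-1 :> R by rewrite invr_ge0.
rewrite /coin; under eq_esum do rewrite EFinD.
by rewrite esumD ?esum_point ?EFinD // => x _; case: ifP; rewrite lee_fin.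
Qed.

Lemma esum_entropy_coin (T : choiceType) (a b : T) (D : set T) : a \in D -> b \in D ->
  \esum_(x in D) (- coin a b x * ln (coin a b x))%:E = (ln 2 *+ (a != b))%:E.
Proof.
move=> Da Db; case: eqVneq => [<- | ab].
  apply: esum1 => x _; rewrite /coin; case: eqP => _; last by rewrite addr0 oppr0 mul0r.
  by rewrite half_add_half ln1 mulr0.
pose h : R := ln 2 / 2.
transitivity (\esum_(x in D) ((if x == a then h else 0)%:E + (if x == b then h else 0)%:E))%E.
  apply: eq_esum => x _; rewrite -EFinD /coin /h; congr EFin.
  have lnh : - 2^-1 * ln 2^-1 = ln 2 / 2 :> R by rewrite lnV ?posrE // mulrNN mulrC.
  case: (eqVneq x a) => [-> | xa]; first by rewrite (negbTE ab) !addr0 lnh.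
  by case: eqP; rewrite !add0r ?lnh // oppr0 mul0r.
have h_ge0 : 0 <= h by rewrite divr_ge0 // ln_ge0 // ler1n.
rewrite esumD ?esum_point ?Da ?Db // => [|x _|x _]; last 2 first.
- by case: ifP; rewrite lee_fin.
- by case: ifP; rewrite lee_fin.
by rewrite -EFinD -splitr.
Qed.

Variable n : nat.
Implicit Types (a b : outcome n) (A S : {set 'I_n}).

Lemma marg_coin a b A y :
  marg (coin a b) A y = (coin (Defs.proj A a) (Defs.proj A b) y)%:E.
Proof.
have memE c : (c \in [set x | Defs.proj A x = y]) = (y == Defs.proj A c).
  by apply/idP/eqP; rewrite inE => ->.
by rewrite /marg esum_coin !memE.
Qed.

Lemma ent_coin a b A :
  ent (coin a b) A = (ln 2 *+ (Defs.proj A a != Defs.proj A b))%:E.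
Proof.
rewrite /ent; under eq_esum do rewrite marg_coin /=.
by apply: esum_entropy_coin; rewrite inE; [exists a | exists b].
Qed.

Lemma is_dist_coin a b : is_dist (coin a b).
Proof.
split=> [x | | i].
- by rewrite /coin addr_ge0 //; case: ifP; rewrite // invr_ge0.
- by rewrite esum_coin !in_setT half_add_half.
- by rewrite ent_coin ltry.
Qed.

End TwoPointEntropy.

Local Notation set0 := finset.set0.

Section SharedBit.
Variables (R : realType) (n : nat).
Implicit Types (A C S : {set 'I_n}) (K : CMI n).

Definition fill S (c : nat) : outcome n := [ffun i => if i \in S then c else 0%N].

Lemma proj_fill A S c : Defs.proj A (fill S c) = fill (A :&: S) c.
Proof. by apply/ffunP => i; rewrite !ffunE inE; case: (i \in A). Qed.

Lemma eq_fill01 S : (fill S 0 == fill S 1) = (S == set0).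
Proof.
apply/eqP/eqP => [/ffunP fill01 | ->]; last by apply/ffunP => i; rewrite !ffunE inE.
by apply/setP => i; move: (fill01 i); rewrite !ffunE inE; case: (i \in S).
Qed.

Definition shared_bit S : outcome n -> R := coin R (fill S 0) (fill S 1).

Lemma ent_shared_bit S A : ent (shared_bit S) A = (ln 2 *+ (A :&: S != set0))%:E.
Proof. by rewrite ent_coin !proj_fill eq_fill01. Qed.

Lemma bigcup_seq_meet (s : seq {set 'I_n}) S :
  ((\bigcup_(Q <- s) Q) :&: S != set0) = has (fun Q => Q :&: S != set0) s.
Proof.
elim: s => [|Q s IH]; first by rewrite big_nil finset.set0I eqxx.
by rewrite big_cons finset.setIUl finset.setU_eq0 negb_and IH.
Qed.

Lemma cent_shared_bit S A C : cent (shared_bit S) A C =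
  (ln 2 *+ ((C :&: S == set0) && (A :&: S != set0)))%:E.
Proof.
rewrite /cent !ent_shared_bit -EFinB finset.setIUl finset.setU_eq0 negb_and.
by case: (C :&: S == set0); rewrite /= ?orbF ?orbT ?subrr ?subr0.
Qed.

Lemma valid_shared_bit S K : valid (shared_bit S) K <->
  (K.1 :&: S == set0) ==> (count (fun Q => Q :&: S != set0) K.2 <= 1)%N.
Proof.
rewrite /valid [X in (_ - X)%E]cent_shared_bit bigcup_seq_meet has_count.
under eq_bigr do rewrite cent_shared_bit.
rewrite sumEFin -EFinB; case: (K.1 :&: S == set0) => /=; last first.
  by rewrite big1 ?subrr.
rewrite sumrMnr -sumn_count sumnE big_map.
case: (\sum_(_ <- _) _)%N => [|[|c]] /=; rewrite ?subrr; split=> //.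
by move=> -[/eqP]; rewrite mulrSr addrK mulrn_eq0 /= gt_eqF // ln_gt0 // ltr1n.
Qed.

Definition linked K (x y : 'I_n) : bool :=
  [&& x \notin K.1, y \notin K.1
    & (1 < count (fun Q : {set 'I_n} => (x \in Q) || (y \in Q)) K.2)%N].

Lemma setI_pair_eq0 A x y : (A :&: [set x; y] == set0) = (x \notin A) && (y \notin A).
Proof. by rewrite finset.setIUr finset.setU_eq0 !setI_eq0 !(disjoint_sym A) !disjoints1. Qed.

Lemma valid_shared_pair K x y : valid (shared_bit [set x; y]) K <-> ~~ linked K x y.
Proof.
rewrite valid_shared_bit setI_pair_eq0 /linked andbA ltnNge.
under eq_count do rewrite setI_pair_eq0 negb_and !negbK.
by case: (_ && _); rewrite //= negbK.
Qed.

Lemma linkedC K x y : linked K x y = linked K y x.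
Proof. by rewrite /linked andbCA; under eq_count do rewrite orbC. Qed.

Lemma linked_equiv K K' : cmi_equiv R K K' -> linked K =2 linked K'.
Proof.
move=> KK' x y; have := KK' _ (is_dist_coin R (fill [set x; y] 0) (fill [set x; y] 1)).
by rewrite !valid_shared_pair => -[nK_nK' nK'_nK]; apply/idP/idP; apply: contraLR.
Qed.

End SharedBit.

Section Blocks.
Variables (T : finType) (E : rel T).

Definition separated x := ~~ E x x && [exists z, ~~ E z z && E x z].

Definition block x : {set T} := [set y | separated y && ~~ E x y].

Definition blocks : {set {set T}} := [set block x | x in separated].

Lemma mem_block x : separated x -> x \in block x.
Proof. by move=> sx; rewrite inE sx; case/andP: sx. Qed.

End Blocks.

Lemma exists_neq_mem (T : eqType) (s : seq T) x : uniq s -> (1 < size s)%N ->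
  exists2 y, y \in s & y != x.
Proof.
case: s => [|a [|b s]] //= /andP[a_bs _] _.
have [ax | ax] := eqVneq a x; last by exists a; rewrite ?mem_head.
exists b; first by rewrite !inE eqxx orbT.
by apply: contraNneq a_bs => ->; rewrite -ax mem_head.
Qed.

Section PureCMI.
Variables (n : nat) (K : CMI n).
Hypothesis pK : pure_form K.

Definition mult (x : 'I_n) := count (fun Q : {set 'I_n} => x \in Q) K.2.

Lemma mult_gt0_notin_cond x : (0 < mult x)%N -> x \notin K.1.
Proof.
rewrite -has_count => /hasP[Q QK xQ]; have [_ QC] := pK QK.
apply/negP => xC; suff : x \in Q :&: K.1 by rewrite QC inE.
by rewrite inE xQ xC.
Qed.

Lemma mem_IK x : (x \in IK K) = (1 < mult x)%N.
Proof.
rewrite /IK; case: ifPn => [_ | K2_le1]; first by rewrite inE.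
rewrite finset.in_set0; apply/esym/negbTE; rewrite -leqNgt.
by rewrite (leq_trans (count_size _ _)) // leqNgt.
Qed.

Lemma linked_diag x : linked K x x = (1 < mult x)%N.
Proof.
rewrite /linked andbA andbb; under eq_count do rewrite orbb.
have [/mult_gt0_notin_cond -> // | x0] := ltnP 0 (mult x).
by rewrite ltnNge (leq_trans x0) ?andbF.
Qed.

Lemma linked_mult_le1 x y : (mult x <= 1)%N -> (mult y <= 1)%N ->
  linked K x y = [&& mult x == 1%N, mult y == 1%N
                   & ~~ has (fun Q : {set 'I_n} => (x \in Q) && (y \in Q)) K.2].
Proof.
move=> x_le1 y_le1; rewrite /linked has_count -leqNgt.
have cUI : (count (fun Q : {set 'I_n} => (x \in Q) || (y \in Q)) K.2 +
            count (fun Q : {set 'I_n} => (x \in Q) && (y \in Q)) K.2 = mult x + mult y)%N.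
  exact: count_predUI.
move: (count (fun Q => _ || _) K.2) (count (fun Q => _ && _) K.2) cUI => cU cI cUI.
have [x1 | x_ne1] := eqVneq (mult x) 1%N; have [y1 | y_ne1] := eqVneq (mult y) 1%N.
- by rewrite !mult_gt0_notin_cond ?x1 ?y1 //=; apply/idP/idP; lia.
all: by rewrite ltnNge (_ : cU <= 1)%N ?andbF //; lia.
Qed.

Lemma mult1_mem_uniq x Q1 Q2 : mult x = 1%N -> Q1 \in K.2 -> Q2 \in K.2 ->
  x \in Q1 -> x \in Q2 -> Q1 = Q2.
Proof.
rewrite /mult -size_filter => x1 Q1K Q2K xQ1 xQ2.
have : Q1 \in [seq Q : {set 'I_n} <- K.2 | x \in Q] by rewrite mem_filter xQ1.
have : Q2 \in [seq Q : {set 'I_n} <- K.2 | x \in Q] by rewrite mem_filter xQ2.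
by case: seq.filter x1 => [|Q [|]] //= _; rewrite !inE => /eqP-> /eqP->.
Qed.

Lemma in_setD_IK Q x :
  Q \in K.2 -> (x \in Q :\: IK K) = (x \in Q) && (mult x == 1)%N.
Proof.
move=> QK; rewrite inE mem_IK -leqNgt andbC; case xQ: (x \in Q) => //=.
have x_gt0 : (0 < mult x)%N by rewrite -has_count; apply/hasP; exists Q.
by rewrite eqn_leq x_gt0 andbT.
Qed.

Lemma PsP B :
  reflect (exists2 Q, Q \in K.2 & B = Q :\: IK K /\ B != set0) (B \in Ps K).
Proof.
apply: (iffP mapP) => [[Q] | [Q QK [-> B_ne0]]]; last by exists Q; rewrite ?mem_filter ?B_ne0.
by rewrite mem_filter => /andP[B_ne0 QK] ->; exists Q.
Qed.

Lemma mult_Ps B x : B \in Ps K -> x \in B -> mult x = 1%N.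
Proof. by case/PsP=> Q QK [-> _]; rewrite in_setD_IK // => /andP[_ /eqP]. Qed.

Lemma Ps_linked B1 B2 x z : B1 \in Ps K -> B2 \in Ps K -> B1 != B2 ->
  x \in B1 -> z \in B2 -> linked K x z.
Proof.
move=> B1P B2P B12 xB1 zB2; have x1 := mult_Ps B1P xB1; have z1 := mult_Ps B2P zB2.
case/PsP: B1P B12 xB1 => Q1 Q1K [-> _]; case/PsP: B2P zB2 => Q2 Q2K [-> _].
rewrite !in_setD_IK // => /andP[zQ2 _] Q12 /andP[xQ1 _].
rewrite linked_mult_le1 ?x1 ?z1 //=; apply/hasPn => Q QK; apply/negP => /andP[xQ zQ].
rewrite -(mult1_mem_uniq x1 QK Q1K xQ xQ1) -(mult1_mem_uniq z1 QK Q2K zQ zQ2) in Q12.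
by rewrite eqxx in Q12.
Qed.

Lemma Ps_separated B1 B2 x : B1 \in Ps K -> B2 \in Ps K -> B1 != B2 ->
  x \in B1 -> separated (linked K) x.
Proof.
move=> B1P B2P B12 xB1; have /PsP[_ _ [_ /set0Pn[z zB2]]] := B2P.
rewrite /separated linked_diag (mult_Ps B1P xB1) /=; apply/existsP; exists z.
by rewrite linked_diag (mult_Ps B2P zB2) (Ps_linked B1P B2P).
Qed.

Lemma block_separated x : separated (linked K) x ->
  exists2 Q, Q \in K.2 & x \in Q /\ block (linked K) x = Q :\: IK K.
Proof.
move=> /andP[+ /existsP[z /andP[+]]]; rewrite !linked_diag -!leqNgt => xx zz.
rewrite linked_mult_le1 // => /and3P[/eqP x1 /eqP z1 xz_apart].
have [Q QK xQ] : exists2 Q, Q \in K.2 & x \in Q.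
  by apply/hasP; rewrite has_count -/(mult x) x1.
exists Q => //; split=> //; apply/setP => y; rewrite in_setD_IK // inE.
apply/andP/andP => [[/andP[+ /existsP[w /andP[+ yw]]] xy] | [yQ /eqP y1]].
  rewrite !linked_diag -!leqNgt => yy ww.
  move: yw; rewrite linked_mult_le1 // => /and3P[/eqP y1 _ _].
  rewrite linked_mult_le1 ?x1 ?y1 //= negbK in xy; case/hasP: xy => Q' Q'K /andP[xQ' yQ'].
  by rewrite -(mult1_mem_uniq x1 Q'K QK xQ' xQ) yQ' y1.
split; last by rewrite linked_mult_le1 ?x1 ?y1 //= negbK; apply/hasP; exists Q; rewrite ?xQ.
rewrite /separated linked_diag y1 /=; apply/existsP; exists z.
rewrite linked_diag z1 linked_mult_le1 ?y1 ?z1 //=; apply/hasPn => Q' Q'K.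
apply: contraNN xz_apart => /andP[yQ' zQ']; apply/hasP; exists Q => //.
by rewrite xQ -(mult1_mem_uniq y1 Q'K QK yQ' yQ).
Qed.

Lemma separated_block_Ps x : separated (linked K) x -> block (linked K) x \in Ps K.
Proof.
move=> sx; have [Q QK [_ blockE]] := block_separated sx.
apply/PsP; exists Q; rewrite // -blockE; split=> //.
by apply/set0Pn; exists x; apply: mem_block.
Qed.

Lemma separated_size_Ps x : separated (linked K) x -> (1 < size (Ps K))%N.
Proof.
move=> sx; case/andP: (sx) => xx /existsP[z /andP[zz xz]].
have sz : separated (linked K) z.
  by rewrite /separated zz; apply/existsP; exists x; rewrite xx linkedC.
have bxz : block (linked K) x != block (linked K) z.
  by apply: contraTneq (mem_block sx) => ->; rewrite inE linkedC xz andbF.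
apply: (@uniq_leq_size _ [:: block (linked K) x; block (linked K) z]).
  by rewrite /= inE bxz.
by move=> B; rewrite !inE => /orP[] /eqP ->; apply: separated_block_Ps.
Qed.

Lemma uniq_Ps : uniq (Ps K).
Proof.
apply: count_mem_uniq => B; have [BP | /count_memPn -> //] := boolP (B \in Ps K).
have /set0Pn[x xB] : B != set0 by case/PsP: BP => Q _ [].
have : (count_mem B (Ps K) <= mult x)%N.
  rewrite count_map count_filter; apply: sub_count => Q /andP[/eqP QB _].
  by move: xB; rewrite -QB inE => /andP[].
have : (0 < count_mem B (Ps K))%N by rewrite -has_count has_pred1.
by rewrite (mult_Ps BP xB); case: count => [|[]].
Qed.

Lemma canP_Ps : canP K = if (1 < size (Ps K))%N then Ps K else [::].
Proof.
have size_Ps : (size (Ps K) <= size K.2)%N by rewrite size_map size_filter count_size.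
rewrite /canP; case: (leqP (size K.2) 1) => [K2_le1 | K2_gt1].
  by rewrite ifN // -leqNgt (leq_trans size_Ps).
have [IK0 | IK_ne0] := eqVneq (IK K) set0; last by case: leqP.
rewrite ifT // (_ : size (Ps K) = size K.2) // /Ps IK0 size_map size_filter.
by apply/eqP; rewrite -all_count; apply/allP => Q QK; rewrite finset.setD0; case: (pK QK).
Qed.

Lemma uniq_canP : uniq (canP K).
Proof. by rewrite canP_Ps; case: ifP => // _; apply: uniq_Ps. Qed.

Lemma mem_canP B : (B \in canP K) = (B \in blocks (linked K)).
Proof.
rewrite canP_Ps; case: ltnP => [Ps_gt1 | Ps_le1]; last first.
  by apply/esym/imsetP => -[x /separated_size_Ps]; rewrite ltnNge Ps_le1.
apply/idP/imsetP => [BP | [x sx ->]]; last exact: separated_block_Ps.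
have [B' B'P B'B] := exists_neq_mem B uniq_Ps Ps_gt1.
case/PsP: (BP) => Q QK [BE /set0Pn[x xB]].
have sx : separated (linked K) x by apply: Ps_separated BP B'P _ xB; rewrite eq_sym.
have [Q' Q'K [xQ' blockE]] := block_separated sx.
exists x => //; move: xB; rewrite blockE BE in_setD_IK // => /andP[xQ /eqP x1].
by rewrite (mult1_mem_uniq x1 QK Q'K xQ xQ').
Qed.

End PureCMI.

Theorem mainTheorem5 (R : realType) (n : nat) (K K' : CMI n) :
  pure_form K -> pure_form K' ->
  ~ degenerate R K -> ~ degenerate R K' ->
  cmi_equiv R K K' ->
  perm_eq (canP K) (canP K').
Proof.
move=> pK pK' _ _ KK'.
have linkedE : linked K = linked K'.
  by apply/funext => x; apply/funext => y; apply: linked_equiv KK' x y.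
apply: uniq_perm; [exact: uniq_canP | exact: uniq_canP |] => B.
by rewrite !mem_canP // linkedE.
Qed.
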